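(* Let $R$ be the holistic system robustness random variable (defined in the context), with distribution $\pi_R$, so that $\mathbb{P}_{\pi_R}[-R\le a]=1$. Let $\epsilon\in(0,1)$, $\gamma\in[0,1)$, $\alpha\in(0,1]$, and define \[ L(x,\mu,t)=t\left(\mu+\frac{1}{\alpha}\max\left\{\frac{x}{t}-\mu,0\right\}\right),\qquad u_b(\mu,t)=L(a,\mu,t). \] Let $r_1,\dots,r_N$ be independent samples of $R$ with $N\ge\frac{\log(1-\gamma)}{\log(1-\epsilon)}$, and $\zeta^*_N(\mu,t)=\max_{1\le k\le N}L(-r_k,\mu,t)$. Then \[ \mathbb{P}^N_{\pi_R}\left[r^*_C\triangleq\inf_{\mu\in\mathbb{R},\ t>0}\zeta^*_N(\mu,t)(1-\epsilon)+u_b(\mu,t)\epsilon\ \ge\ \mathrm{CVaR}_\alpha(-R)\right]\ge\gamma. \]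
   Context: System setting: $\dot x = f(x,u)+\xi$, $x\in\mathcal{X}\subset\mathbb{R}^n$, $u=U(x,\theta)\in\mathcal{U}\subset\mathbb{R}^m$, $\theta\in\Theta\subset\mathbb{R}^p$ a parameter fixed along a trajectory, and $\xi$ stochastic noise with unknown distribution $\pi_\xi(x,u,t)$. $x^\theta$ denotes the resulting closed-loop state signal in $\mathcal{S}=\{s:\mathbb{R}_{\ge0}\to\mathbb{R}^n\}$ from an initial condition $x_0\in\mathcal{X}_0\subseteq\mathcal{X}$. A robustness metric is a function $\rho:\mathcal{S}\to[-a,b]$ with $a,b>0$ such that $\rho(s)\ge0$ only for signals exhibiting desired properties. The holistic system robustness $R$ is the scalar random variable whose samples are $r=\rho(x^\theta)$, where $(x_0,\theta)$ is sampled uniformly from $\mathcal{X}_0\times\Theta$. $\mathrm{CVaR}_\alpha(Z)=\inf_{z\in\mathbb{R}} z+\frac{\mathbb{E}[\max(Z-z,0)]}{\alpha}$. $\zeta^*_N(\mu,t)$ is the solution of $\min_\zeta\zeta$ s.t. $\zeta\ge L(-r_i,\mu,t)$ for all $i$; $\mathbb{P}^N_{\pi_R}$ is the $N$-fold product measure of the i.i.d. sample. *)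

From HB Require Import structures.
From mathcomp Require Import all_boot all_order all_algebra.
From mathcomp Require Import all_classical all_reals all_analysis.
Set Implicit Arguments. Unset Strict Implicit. Unset Printing Implicit Defensive.
Import Order.TTheory GRing.Theory Num.Theory.
Local Open Scope classical_set_scope.
Local Open Scope ring_scope.

Definition Lfun {R : realType} (alpha x mu t : R) : R :=
  t * (mu + alpha^-1 * Num.max (x / t - mu) 0).

Definition CVaR {d} {T : measurableType d} {R : realType}
  (alpha : R) (P : probability T R) (Z : T -> R) : \bar R :=
  ereal_inf [set (z%:E + (\int[P]_w (Num.max (Z w - z) 0)%:E) * (alpha^-1)%:E)%E
            | z in [set: R]].

(* zeta*_N(mu,t) = min { zeta | zeta >= L(-r_i, mu, t) for all i }
   = max_k L(-r_k, mu, t)  (-oo if there is no sample). *)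
Definition zeta_star {R : realType} (N : nat) (alpha : R) (r : 'I_N -> R) (mu t : R)
  : \bar R :=
  \big[Order.max/-oo%E]_(k < N) (Lfun alpha (- r k) mu t)%:E.

Definition rC_star {R : realType} (N : nat) (alpha eps a : R) (r : 'I_N -> R) : \bar R :=
  ereal_inf [set e : \bar R | exists mu t : R, 0 < t /\
               e = (zeta_star alpha r mu t * (1 - eps)%:E
                    + (Lfun alpha a mu t * eps)%:E)%E].

Definition iid_sample {d} {Omega : measurableType d} {R : realType} (N : nat)
  (Q : probability Omega R) (pi : probability R R) (r : 'I_N -> Omega -> R) : Prop :=
  [/\ (forall i, measurable_fun [set: Omega] (r i)),
      (forall i (B : set R), measurable B -> Q (r i @^-1` B) = pi B) &
      (forall B : 'I_N -> set R, (forall i, measurable (B i)) ->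
         Q [set w | forall i, B i (r i w)] = (\prod_(i < N) Q (r i @^-1` B i))%E)].

(* The bound r*_C depends on the sample only through its worst loss
   x = max_k (- r_k), and is nondecreasing in x.  Fix (mu, t) and z = t mu.
   If P[- R > x] <= eps then, with b = min(x, a) and using - R <= a almost
   surely, the hinge max(- R - z, 0) lies below the step function jumping from
   max(b - z, 0) to max(a - z, 0) at - R = b, so the CVaR objective at z is at
   most (1 - eps) L(x, mu, t) + eps L(a, mu, t); hence CVaR_alpha(- R) <= r*_C.
   So the bound fails only when every sample lies in the set B of values y
   with P[- R > - y] > eps.  B is upper closed and P[R >= y] < 1 - eps on B,
   so P[B] <= 1 - eps by continuity from below, and by independence the
   failure probability is P[B]^N <= (1 - eps)^N <= 1 - gamma. *)

From Pilot Require Import Defs.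
From HB Require Import structures.
From mathcomp Require Import all_boot all_order all_algebra.
From mathcomp Require Import all_classical all_reals all_analysis.
From mathcomp Require Import measurable_realfun ring lra.
Set Implicit Arguments. Unset Strict Implicit. Unset Printing Implicit Defensive.
Import Order.TTheory GRing.Theory Num.Theory.
Local Open Scope classical_set_scope.
Local Open Scope ring_scope.

Section loss.
Variable R : realType.
Implicit Types alpha eps a x y mu t : R.

Lemma LfunE alpha x mu t : 0 < t ->
  Defs.Lfun alpha x mu t = t * mu + alpha^-1 * Num.max (x - t * mu) 0.
Proof.
move=> t_gt0; rewrite /Defs.Lfun mulrDr mulrCA maxr_pMr ?ltW // mulr0 mulrBr.
by rewrite mulrCA mulfV ?gt_eqF // mulr1.
Qed.

Lemma Lfun_nondecreasing alpha mu t : 0 < alpha -> 0 < t ->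
  {homo (fun x => Defs.Lfun alpha x mu t) : x y / x <= y}.
Proof.
move=> alpha_gt0 t_gt0 x y xy; rewrite !LfunE // lerD2l.
apply: ler_wpM2l; first by rewrite invr_ge0 ltW.
by apply: le_max2; rewrite ?lerD2r.
Qed.

Definition rC_worst alpha eps a x : \bar R :=
  ereal_inf [set e : \bar R | exists mu t : R, 0 < t /\
               e = ((Defs.Lfun alpha x mu t)%:E * (1 - eps)%:E
                    + (Defs.Lfun alpha a mu t * eps)%:E)%E].

Lemma rC_worst_nondecreasing alpha eps a : 0 < alpha -> eps <= 1 ->
  {homo rC_worst alpha eps a : x y / x <= y >-> (x <= y)%E}.
Proof.
move=> alpha_gt0 eps_le1 x y xy; apply: le_ereal_inf_tmp => _ [mu [t [t_gt0 ->]]].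
apply: le_trans (ereal_inf_lbound _) _; first by exists mu, t.
by rewrite leeD2r // lee_wpmul2r ?lee_fin ?subr_ge0 // Lfun_nondecreasing.
Qed.

Lemma rC_star_argmax n alpha eps a (s : 'I_n -> R) k0 : 0 < alpha ->
  (forall k, - s k <= - s k0) ->
  rC_star alpha eps a s = rC_worst alpha eps a (- s k0).
Proof.
move=> alpha_gt0 k0_max.
have zeta_max mu t :
    0 < t -> zeta_star alpha s mu t = (Defs.Lfun alpha (- s k0) mu t)%:E.
  move=> t_gt0; apply/le_anti/andP; split; last first.
    exact: (le_bigmax _ (fun k => (Defs.Lfun alpha (- s k) mu t)%:E) k0).
  apply: bigmax_le => [|k _]; first exact: leNye.
  by rewrite lee_fin Lfun_nondecreasing.
rewrite /rC_star /rC_worst; congr ereal_inf; apply/seteqP.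
by split=> _ [mu [t [t_gt0 ->]]]; exists mu, t; rewrite zeta_max.
Qed.

End loss.

Section upper_closed.
Variable R : realType.

Definition upper_closed (B : set R) := forall y y', B y -> y <= y' -> B y'.

Lemma measurable_upper_closed (B : set R) : upper_closed B -> measurable B.
Proof.
move=> Bup; apply: is_interval_measurable => x y Bx _ z /andP[xz _].
exact: Bup Bx xz.
Qed.

Lemma upper_closed_measure_le (mu : {measure set R -> \bar R}) (B : set R)
    (p : R) :
  0 <= p -> upper_closed B -> has_lbound B ->
  (forall y, B y -> (mu [set v | (y <= v)%R] <= p%:E)%E) -> (mu B <= p%:E)%E.
Proof.
move=> p_ge0 Bup Blb Btail.
have [[y0 By0]|B0] := pselect (exists y, B y); last first.
  rewrite (_ : B = set0) ?measure0 ?lee_fin //.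
  by apply/seteqP; split=> y // By; apply: B0; exists y.
set s := inf B.
have [Bs|Bns] := pselect (B s).
  rewrite (_ : B = [set v | s <= v]); first exact: Btail.
  by apply/seteqP; split=> v; [exact: ge_inf | exact: Bup].
pose F n := [set v : R | s + n.+1%:R^-1 <= v].
have BF n : B (s + n.+1%:R^-1).
  have B_sup : has_inf B by split; [exists y0 | exact: Blb].
  have [b Bb bs] := @inf_adherent _ B n.+1%:R^-1 ltac:(by []) B_sup.
  by apply: Bup Bb _; rewrite ltW.
have BE : B = \bigcup_n F n.
  apply/seteqP; split=> v; last by move=> [n _]; exact: Bup (BF n).
  move=> Bv; have sv : s < v.
    by rewrite lt_def ge_inf // andbT; apply: contra_notN Bns => /eqP <-.
  by have [k kv] := ltr_add_invr sv; exists k => //; rewrite /F /= ltW.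
have mF n : measurable (F n).
  by apply: measurable_upper_closed => x y; exact: le_trans.
have F_nd : nondecreasing_seq F.
  move=> n m nm; apply/subsetPset => v; apply: le_trans.
  by rewrite lerD2l lef_pV2 ?posrE // ler_nat.
have mUF : measurable (\bigcup_n F n).
  by rewrite -BE; exact: measurable_upper_closed.
have F_cvg := nondecreasing_cvg_mu (mu := mu) mF mUF F_nd.
rewrite BE -(cvg_lim _ F_cvg) //; apply: lime_le.
  by apply/cvg_ex; exists (mu (\bigcup_n F n)).
by apply: nearW => n; exact: Btail.
Qed.

End upper_closed.

Section hinge_integral.
Context d (T : measurableType d) (R : realType) (P : probability T R).

Lemma measurable_gt_fun (Z : T -> R) (c : R) :
  measurable_fun setT Z -> measurable [set w | c < Z w].
Proof.
have -> : [set w | c < Z w] = Z @^-1` `]c, +oo[%classic.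
  by apply/seteqP; split=> w /=; rewrite in_itv /= andbT.
by move=> mZ; rewrite -[X in measurable X]setTI; exact: mZ.
Qed.

Lemma integral_cstD_indic (S : set T) (c0 c1 : R) : measurable S ->
  0 <= c0 -> 0 <= c1 ->
  (\int[P]_w (c0 + c1 * \1_S w)%:E = (c0 + c1 * fine (P S))%:E)%E.
Proof.
move=> mS c0_ge0 c1_ge0.
have mI : measurable_fun setT (fun w => (\1_S w)%:E : \bar R).
  by apply/measurable_EFinP; exact: measurable_indic.
under eq_integral do rewrite EFinD EFinM.
rewrite ge0_integralD //; last 2 first.
- by move=> w _; rewrite mule_ge0 ?lee_fin.
- exact: measurable_funeM.
rewrite integral_cst // [X in (c0%:E * X)%E]probability_setT mule1.
rewrite ge0_integralZl_EFin //.
by rewrite integral_indic // setIT EFinD EFinM fineK // fin_num_measure.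
Qed.

Lemma integral_hinge_le (Z : T -> R) (a b z : R) :
  measurable_fun setT Z -> b <= a -> P [set w | a < Z w] = 0%E ->
  (\int[P]_w (Num.max (Z w - z) 0)%:E <=
   (Num.max (b - z) 0 + (Num.max (a - z) 0 - Num.max (b - z) 0)
                         * fine (P [set w | b < Z w]))%:E)%E.
Proof.
move=> mZ ba Pa0.
set gb := Num.max (b - z) 0; set ga := Num.max (a - z) 0.
set S := [set w | b < Z w].
have gb_ge0 : 0 <= gb by rewrite le_max lexx orbT.
have gbga : gb <= ga by apply: le_max2; rewrite ?lerD2r.
rewrite -integral_cstD_indic ?subr_ge0 //; last exact: measurable_gt_fun.
apply: ae_ge0_le_integral => //.
- by move=> w _; rewrite lee_fin le_max lexx orbT.
- apply/measurable_EFinP; apply: measurable_maxr => //.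
  exact: measurable_funB.
- move=> w _; rewrite lee_fin indicE.
  by case: (w \in S); rewrite ?mulr1 ?subrKC ?mulr0 ?addr0 // (le_trans gb_ge0).
- apply/measurable_EFinP; apply: measurable_funD => //.
  apply: measurable_funM => //; apply: measurable_indic; exact: measurable_gt_fun.
exists [set w | a < Z w]; split => //; first exact: measurable_gt_fun.
move=> w /= step_fails; rewrite ltNge; apply/negP => Zwa.
apply: step_fails => _; rewrite lee_fin indicE.
case: (boolP (w \in S)) => [_|/negP wS]; first by rewrite mulr1 subrKC le_max2 ?lerD2r.
rewrite /= mulr0 addr0 le_max2 ?lerD2r // leNgt.
by apply: contra_notN wS => bZ; rewrite inE.
Qed.

End hinge_integral.

Lemma CVaR_le_rC_worst (R : realType) d (T : measurableType d)
    (P : probability T R) (Z : T -> R) (a alpha eps x : R) :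
  measurable_fun setT Z -> 0 < alpha -> 0 <= eps <= 1 ->
  P [set w | a < Z w] = 0%E -> (P [set w | (x < Z w)%R] <= eps%:E)%E ->
  (CVaR alpha P Z <= rC_worst alpha eps a x)%E.
Proof.
move=> mZ alpha_gt0 /andP[eps_ge0 eps_le1] Pa0 Px.
have [b [bx ba Pb]] : exists b,
    [/\ b <= x, b <= a & (P [set w | (b < Z w)%R] <= eps%:E)%E].
  have [xa|/ltW ax] := leP x a; first by exists x.
  by exists a; rewrite Pa0 lee_fin.
apply: le_ereal_inf_tmp => _ [mu [t [t_gt0 ->]]].
set z := t * mu.
apply: le_trans (ereal_inf_lbound _) _; first by exists z.
set gb := Num.max (b - z) 0; set ga := Num.max (a - z) 0.
set gx := Num.max (x - z) 0.
set q := fine (P [set w | b < Z w]).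
have q_ge0 : 0 <= q by rewrite fine_ge0.
have q_le : q <= eps.
  by rewrite -lee_fin fineK // fin_num_measure //; exact: measurable_gt_fun.
have mixture : gb + (ga - gb) * q <= (1 - eps) * gx + eps * ga.
  have gbga : gb <= ga by apply: le_max2; rewrite ?lerD2r.
  have gbgx : gb <= gx by apply: le_max2; rewrite ?lerD2r.
  have h1 : 0 <= (ga - gb) * (eps - q) by rewrite mulr_ge0 // subr_ge0.
  have h2 : 0 <= (1 - eps) * (gx - gb) by rewrite mulr_ge0 // subr_ge0.
  nra.
apply: le_trans (_ : ((z + (gb + (ga - gb) * q) * alpha^-1)%:E <= _)%E).
  rewrite EFinD leeD2l // EFinM; apply: lee_wpmul2r.
    by rewrite lee_fin invr_ge0 ltW.
  exact: integral_hinge_le.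
rewrite -EFinM -EFinD lee_fin !LfunE // -/z -/gx -/ga.
have -> : (z + alpha^-1 * gx) * (1 - eps) + (z + alpha^-1 * ga) * eps =
          z + ((1 - eps) * gx + eps * ga) * alpha^-1 by ring.
by rewrite lerD2l ler_wpM2r // invr_ge0 ltW.
Qed.

Section bad_samples.
Variables (R : realType) (pi : probability R R) (a alpha eps : R).
Hypotheses (alpha_gt0 : 0 < alpha) (eps_gt0 : 0 < eps) (eps_lt1 : eps < 1).
Hypothesis pi_supp : pi [set y | - y <= a] = 1%E.

Let eps_01 : 0 <= eps <= 1. Proof. by rewrite !ltW. Qed.

Let measurable_loss : measurable_fun setT (fun y : R => - y).
Proof. exact: measurable_funN. Qed.

Let measurable_loss_gt c : measurable [set v : R | c < - v].
Proof. exact: measurable_gt_fun. Qed.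

Let pi_beyond_a : pi [set y | a < - y] = 0%E.
Proof.
have mS : measurable [set y : R | - y <= a].
  apply: measurable_upper_closed => y y' ya yy'.
  by apply: le_trans ya; rewrite lerN2.
rewrite (_ : [set y | a < - y] = ~` [set y | - y <= a]); last first.
  by apply/predeqP => y /=; rewrite ltNge; split => /negP.
by rewrite probability_setC // pi_supp subee.
Qed.

Definition bad_sample := [set y : R |
  ~ (CVaR alpha pi (fun v : R => (- v)%R) <= rC_worst alpha eps a (- y))%E].

Lemma bad_sample_upper_closed : upper_closed bad_sample.
Proof.
move=> y y' bad_y yy' good_y'; apply: bad_y; apply: le_trans good_y' _.
by apply: rC_worst_nondecreasing => //; [exact: ltW | rewrite lerN2].
Qed.

Lemma bad_sample_lbound : has_lbound bad_sample.
Proof.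
exists (- a) => y bad_y; rewrite leNgt; apply/negP => y_lt; apply: bad_y.
apply: CVaR_le_rC_worst => //; apply: (@le_trans _ _ (pi [set v | a < - v])).
  rewrite le_measure ?inE // => v /=.
  by move=> lt_yv; apply: lt_trans lt_yv; rewrite ltrNr.
by rewrite pi_beyond_a lee_fin ltW.
Qed.

Lemma bad_sample_tail y :
  bad_sample y -> (pi [set v | (y <= v)%R] <= (1 - eps)%:E)%E.
Proof.
move=> bad_y; have mS := measurable_loss_gt (- y).
have eps_lt : (eps%:E < pi [set v | (- y < - v)%R])%E.
  by rewrite ltNge; apply/negP => small; apply: bad_y; exact: CVaR_le_rC_worst.
rewrite (_ : [set v | y <= v] = ~` [set v | - y < - v]); last first.
  by apply/predeqP => v /=; rewrite ltrN2 leNgt; split => /negP.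
rewrite probability_setC // -(fineK (fin_num_measure _ _ mS)) -EFinB lee_fin.
rewrite lerD2l lerN2.
by rewrite -lee_fin fineK ?fin_num_measure // ltW.
Qed.

Lemma measure_bad_sample : (pi bad_sample <= (1 - eps)%:E)%E.
Proof.
apply: upper_closed_measure_le.
- by rewrite subr_ge0 ltW.
- exact: bad_sample_upper_closed.
- exact: bad_sample_lbound.
- exact: bad_sample_tail.
Qed.

Lemma CVaR_le_rC_starP n (s : 'I_n.+1 -> R) :
  (CVaR alpha pi (fun v : R => (- v)%R) <= rC_star alpha eps a s)%E <->
  ~ (forall i, bad_sample (s i)).
Proof.
have [k0 _ k0_max] := @arg_maxP _ _ _ ord0 xpredT (fun i => - s i) erefl.
have {}k0_max k : - s k <= - s k0 by exact: k0_max.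
rewrite (rC_star_argmax _ _ alpha_gt0 k0_max).
split=> [good all_bad|not_all_bad]; first exact: all_bad k0 good.
apply: contra_notP not_all_bad => bad_k0 i good_i; apply: bad_k0.
by apply: le_trans good_i _; apply: rC_worst_nondecreasing => //; exact: ltW.
Qed.

End bad_samples.

Section iid_events.
Context d (Omega : measurableType d) (R : realType) (N : nat).
Variables (Q : probability Omega R) (pi : probability R R).
Variable r : 'I_N -> Omega -> R.
Hypothesis r_iid : iid_sample Q pi r.
Variables (B : set R) (mB : measurable B).

Lemma measurable_iid_all_in : measurable [set w | forall i, B (r i w)].
Proof.
case: r_iid => r_meas _ _.
rewrite (_ : [set w | _] = \bigcap_(i in [set: 'I_N]) (r i @^-1` B)); last first.
  by apply/predeqP => w; split=> [all_in i _|all_in i]; exact: all_in.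
apply: fin_bigcap_measurable; first exact: finite_finset.
by move=> i _; rewrite -[_ @^-1` _]setTI; exact: r_meas.
Qed.

Lemma iid_all_in : Q [set w | forall i, B (r i w)] = ((fine (pi B)) ^+ N)%:E.
Proof.
case: r_iid => _ r_law r_indep.
rewrite (r_indep (fun=> B)) // (eq_bigr (fun=> (fine (pi B))%:E)).
  by rewrite prodEFin prodr_const card_ord.
by move=> i _; rewrite r_law // fineK // fin_num_measure.
Qed.

End iid_events.

Lemma exprn_le_ln_ratio (R : realType) (p c : R) (n : nat) :
  0 < p < 1 -> 0 < c -> ln c / ln p <= n%:R -> p ^+ n <= c.
Proof.
move=> /andP[p_gt0 p_lt1] c_gt0 hn.
have lnp_lt0 : ln p < 0 by apply: ln_lt0; rewrite p_gt0 p_lt1.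
rewrite -ler_ln ?posrE ?exprn_gt0 // lnXn // -mulr_natl.
by move: hn; rewrite ler_ndivrMr.
Qed.

Theorem corollary7 (R : realType) (pi : probability R R) (a : R)
  (ha : 0 < a)
  (hsupp : pi [set x : R | - x <= a] = 1%E)
  (eps gamma alpha : R)
  (heps : 0 < eps < 1) (hgamma : 0 <= gamma < 1) (halpha : 0 < alpha <= 1)
  (N : nat) (hN : ln (1 - gamma) / ln (1 - eps) <= N%:R)
  (d : measure_display) (Omega : measurableType d) (Q : probability Omega R)
  (r : 'I_N -> Omega -> R) (hr : iid_sample Q pi r) :
  (gamma%:E <= Q [set w | CVaR alpha pi (fun x : R => (- x)%R)
                           <= rC_star alpha eps a (fun k => r k w)])%E.
Proof.
case/andP: heps => eps_gt0 eps_lt1; case/andP: hgamma => _ gamma_lt1.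
case/andP: halpha => alpha_gt0 _.
have pow_le : (1 - eps) ^+ N <= 1 - gamma.
  by apply: exprn_le_ln_ratio => //; first (apply/andP; split); lra.
(* With no sample r*_C = -oo, but then hN forces gamma = 0. *)
case: N hN r hr pow_le => [|n] _ r hr pow_le.
  apply: le_trans (measure_ge0 _ _); rewrite lee_fin.
  by move: pow_le; rewrite expr0; lra.
set B := bad_sample pi a alpha eps.
have mB : measurable B.
  by apply: measurable_upper_closed; exact: bad_sample_upper_closed.
rewrite (_ : [set w | _] = ~` [set w | forall i, B (r i w)]); last first.
  by apply/predeqP => w; exact: CVaR_le_rC_starP.
rewrite probability_setC; last exact (measurable_iid_all_in hr mB).
rewrite (iid_all_in hr mB) -EFinB lee_fin.
have pB_le : fine (pi B) <= 1 - eps.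
  by rewrite -lee_fin fineK ?fin_num_measure // measure_bad_sample.
have : fine (pi B) ^+ n.+1 <= (1 - eps) ^+ n.+1.
  by rewrite lerXn2r // nnegrE ?fine_ge0 // subr_ge0 ltW.
lra.
Qed.
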